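(* Let $k\geq2$ and let $L=(l_1,\dots,l_k)$ be positive integers with sum $n$ which are generic and reduced. Then the Euler characteristic of $Tonn^{n,k}(L)$ is $0$.
   Context: $L=(l_1,\dots,l_k)$ is generic if for all subsets $I,J\subseteq[k]$, $\sum_{i\in I}l_i=\sum_{j\in J}l_j$ implies $I=J$. $L$ is reduced if $\gcd(l_1,\dots,l_k)=1$. The generalized tonnetz $Tonn^{n,k}(L)$ is the simplicial complex on vertex set $\mathbb{Z}_n$ whose maximal simplices are the sets $\Delta(x;\sigma)=\{x,\,x+l_{\sigma(1)},\dots,x+l_{\sigma(1)}+\dots+l_{\sigma(k-1)}\}$ (sums in $\mathbb{Z}_n$), for $x\in\mathbb{Z}_n$ and $\sigma\in S_k$; its simplices are all subsets of these sets. *)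

From mathcomp Require Import all_boot all_order all_fingroup all_algebra.
Set Implicit Arguments. Unset Strict Implicit. Unset Printing Implicit Defensive.

(* L = (l_1,...,l_k) is encoded as l : 'I_k -> nat (index i corresponds to l_{i+1}). *)

Definition generic (k : nat) (l : 'I_k -> nat) : Prop :=
  forall I J : {set 'I_k}, \sum_(i in I) l i = \sum_(j in J) l j -> I = J.

Definition reduced (k : nat) (l : 'I_k -> nat) : Prop :=
  \big[gcdn/0]_(i < k) l i = 1.

(* Vertex set Z_n is represented by 'I_n (residues 0..n-1).
   Delta(x; s) = { x + l_{s(0)} + ... + l_{s(i-1)} mod n | 0 <= i < k }. *)
Definition tonn_simplex (n k : nat) (l : 'I_k -> nat) (x : 'I_n) (s : 'S_k)
  : {set 'I_n} :=
  [set y : 'I_n | [exists i : 'I_k,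
     nat_of_ord y == (x + \sum_(j < k | j < i) l (s j)) %% n]].

Definition tonn_face (n k : nat) (l : 'I_k -> nat) (A : {set 'I_n}) : bool :=
  [exists x : 'I_n, exists s : 'S_k, A \subset tonn_simplex l x s].

(* Euler characteristic: sum over nonempty faces A of (-1)^(dim A) = (-1)^(|A|-1). *)
Definition tonn_euler_char (n k : nat) (l : 'I_k -> nat) : int :=
  \sum_(A : {set 'I_n} | (A != set0) && tonn_face l A) (-1) ^+ (#|A|.-1).

From mathcomp Require Import all_boot all_order all_fingroup all_algebra.
From mathcomp Require Import zify.
Set Implicit Arguments. Unset Strict Implicit. Unset Printing Implicit Defensive.
Import GRing.Theory Num.Theory.

(* A sign-reversing involution on the nonempty faces.  Fix an index i0 and call
   x an anchor of a face A if x \in A and A lies in a maximal simplex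
   Delta(x; sigma) whose last step is l_i0.  Every nonempty face has an anchor,
   obtained by rotating a maximal simplex containing it.  The anchor is unique:
   the gap of A that ends at an anchor is the sum of a set of l_i's containing
   l_i0; by genericity this set is also the gap read in any other maximal
   simplex Delta(x'; sigma') containing A, and since l_i0 is the last step of
   sigma' that gap ends at x'.  The vertex x - l_i0 lies in every simplex
   anchored at x and differs from x, so adding or removing it keeps the anchor;
   this pairs the nonempty faces with cardinalities of opposite parity. *)

Section Toggle.
Variable T : finType.
Implicit Types (v x : T) (A B : {set T}).

Definition toggle v A : {set T} := if v \in A then A :\ v else v |: A.

Lemma toggleK v : involutive (toggle v).
Proof.
move=> A; rewrite /toggle; case: (boolP (v \in A)) => vA.
- by rewrite setD11 setD1K.
- by rewrite setU11 setU1K.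
Qed.

Lemma in_toggle v A x : x != v -> (x \in toggle v A) = (x \in A).
Proof. by move=> xv; rewrite /toggle; case: ifP; rewrite !inE (negbTE xv). Qed.

Lemma toggle_subset v A B : v \in B -> (toggle v A \subset B) = (A \subset B).
Proof.
move=> vB; rewrite /toggle; case: ifP => vA.
- apply/idP/idP => [sAB|]; last exact/subset_trans/subD1set.
  by rewrite -(setD1K vA) subUset sub1set vB.
- by rewrite subUset sub1set vB.
Qed.

Lemma odd_card_toggle v A : odd #|toggle v A| = ~~ odd #|A|.
Proof.
rewrite /toggle; case: ifP => vA; last by rewrite cardsU1 vA.
by rewrite [in RHS](cardsD1 v A) vA negbK.
Qed.

End Toggle.

Section SignReversingInvolution.
Local Open Scope ring_scope.

Lemma sum_sign_reversing_involution (R : numDomainType) (T : finType)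
    (P : pred T) (F : T -> R) (g : T -> T) :
    involutive g -> (forall A, P (g A) = P A) ->
    (forall A, P A -> F (g A) = - F A) ->
  \sum_(A | P A) F A = 0.
Proof.
move=> gK Pg Fg; apply/eqP; rewrite -eqNr; apply/eqP.
rewrite -sumrN (reindex_inj (inv_inj gK)) /=.
by apply: eq_big => [A | A]; [exact: Pg | rewrite Pg => /Fg ->; rewrite opprK].
Qed.

Lemma sign_toggle (R : pzRingType) (T : finType) (v : T) (A : {set T}) :
    (0 < #|A|)%N -> (0 < #|toggle v A|)%N ->
  (-1) ^+ #|toggle v A|.-1 = - (-1) ^+ #|A|.-1 :> R.
Proof.
have signS (m : nat) : (0 < m)%N -> (-1) ^+ m.-1 = - (-1) ^+ m :> R.
  by case: m => // m _; rewrite exprS mulN1r opprK.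
move=> /signS -> /signS ->; congr (- _).
rewrite -signr_odd odd_card_toggle -[in RHS]signr_odd.
by case: (odd _); rewrite ?opprK.
Qed.

End SignReversingInvolution.

Section Tonnetz.
Variables (k : nat) (l : 'I_k -> nat) (i0 : 'I_k).
Hypotheses (l_gt0 : forall i, 0 < l i) (k_gt1 : 1 < k) (l_generic : generic l).
Local Notation n := (\sum_(i < k) l i).
Implicit Types (A : {set 'I_n}) (s t : seq 'I_k).

Definition lsum s := \sum_(i <- s) l i.
Definition psum s m := lsum (take m s).
Definition arrangement s := perm_eq s (enum 'I_k).

Lemma lsum_cat s t : lsum (s ++ t) = lsum s + lsum t.
Proof. exact: big_cat. Qed.

Lemma size_le_lsum s : size s <= lsum s.
Proof. by rewrite -sum1_size; apply: leq_sum => i _; apply: l_gt0. Qed.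

Lemma lsum_arrangement s : arrangement s -> lsum s = n.
Proof. by move=> hs; rewrite /lsum (perm_big _ hs) big_enum. Qed.

Lemma size_arrangement s : arrangement s -> size s = k.
Proof. by move=> hs; rewrite (perm_size hs) size_enum_ord. Qed.

Lemma size_rcons_arrangement s i : arrangement (rcons s i) -> size s = k.-1.
Proof. by move/size_arrangement; rewrite size_rcons; lia. Qed.

Lemma psum0 s : psum s 0 = 0.
Proof. by rewrite /psum take0 /lsum big_nil. Qed.

Lemma psum_catl s t m : m <= size s -> psum (s ++ t) m = psum s m.
Proof. by move=> hm; rewrite /psum takel_cat. Qed.

Lemma psum_catr s t m : psum (s ++ t) (size s + m) = lsum s + psum t m.
Proof. by rewrite /psum take_cat ltnNge leq_addr addKn lsum_cat. Qed.

Lemma psum_oversize s m : size s <= m -> psum s m = lsum s.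
Proof. by move=> hm; rewrite /psum take_oversize. Qed.

Lemma psumD s m1 m2 : psum s (m1 + m2) = psum s m1 + psum (drop m1 s) m2.
Proof. by rewrite /psum takeD lsum_cat. Qed.

Lemma psum_add_lsum_drop s m : psum s m + lsum (drop m s) = lsum s.
Proof. by rewrite -lsum_cat cat_take_drop. Qed.

Lemma leq_psum s m1 m2 : m1 <= m2 -> psum s m1 <= psum s m2.
Proof. by move=> hm; rewrite -(subnKC hm) psumD leq_addr. Qed.

Lemma ltn_psum s m1 m2 : m1 < m2 -> m1 < size s -> psum s m1 < psum s m2.
Proof.
move=> hm hs; rewrite -(subnKC (ltnW hm)) psumD -addn1 leq_add2l.
apply: leq_trans (size_le_lsum _).
by rewrite size_take size_drop; case: ifP; rewrite subn_gt0.
Qed.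

Lemma psum_le_lsum s m : psum s m <= lsum s.
Proof.
case: (leqP m (size s)) => hm; last by rewrite psum_oversize // ltnW.
by rewrite -(psum_oversize (leqnn (size s))); apply: leq_psum.
Qed.

Lemma psum_lt_lsum s m : m < size s -> psum s m < lsum s.
Proof. by move=> hm; rewrite -(psum_oversize (leqnn (size s))); apply: ltn_psum. Qed.

Lemma psum_arrangement s : arrangement s -> psum s k = n.
Proof. by move=> hs; rewrite psum_oversize ?size_arrangement // lsum_arrangement. Qed.

Lemma n_gt0 : 0 < n.
Proof. by rewrite (bigD1 i0) //= ltn_addr. Qed.

Definition resn (v : nat) : 'I_n := Ordinal (ltn_pmod v n_gt0).

Lemma resn_ord (a : 'I_n) : resn a = a.
Proof. by apply: val_inj; rewrite /= modn_small. Qed.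

Lemma eq_resn u v : (resn u == resn v) = (u == v %[mod n]).
Proof. by []. Qed.

Lemma resn_modl u v : resn (u %% n + v) = resn (u + v).
Proof. by apply/eqP; rewrite eq_resn modnDml. Qed.

Lemma resnDn u : resn (u + n) = resn u.
Proof. by apply/eqP; rewrite eq_resn modnDr. Qed.

(* Delta(y; sigma), with the permutation sigma listed as the sequence
   [s = [:: sigma 1; ...; sigma k]]. *)
Definition simplex (y : nat) s : {set 'I_n} := [set resn (y + psum s i) | i : 'I_k].

Lemma simplexP a y s :
  reflect (exists i : 'I_k, a = resn (y + psum s i)) (a \in simplex y s).
Proof. by apply: (iffP imsetP) => [[i _ ->]|[i ->]]; exists i. Qed.

Lemma simplex_mod y s : simplex (y %% n) s = simplex y s.
Proof. by apply: eq_imset => i; rewrite resn_modl. Qed.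

Lemma arrangement_perm (sg : 'S_k) : arrangement [seq sg j | j <- enum 'I_k].
Proof.
apply: uniq_perm; rewrite ?(map_inj_uniq (@perm_inj _ sg)) ?enum_uniq //.
by move=> a; rewrite mem_enum inE; apply/mapP; exists (sg^-1 a)%g; rewrite ?mem_enum ?permKV.
Qed.

Lemma arrangementP s :
  arrangement s -> exists sg : 'S_k, s = [seq sg j | j <- enum 'I_k].
Proof.
move=> hs; have s_uniq : uniq s by rewrite (perm_uniq hs) enum_uniq.
have hsz := size_arrangement hs.
have nth_inj : injective (fun j : 'I_k => nth i0 s j).
  by move=> i j /eqP; rewrite nth_uniq ?hsz // => /eqP/val_inj.
exists (perm nth_inj).
rewrite -{1}(take_size s) -(map_nth_iota0 i0 (leqnn _)) hsz.
by rewrite -val_enum_ord -map_comp; apply: eq_map => j; rewrite /= permE.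
Qed.

Lemma sum_perm_prefix (sg : 'S_k) (i : 'I_k) :
  \sum_(j < k | j < i) l (sg j) = psum [seq sg j | j <- enum 'I_k] i.
Proof.
have take_enum : take i (enum 'I_k) = [seq j : 'I_k <- enum 'I_k | j < i].
  apply: (inj_map val_inj); rewrite map_take val_enum_ord take_iota.
  rewrite (minn_idPl (ltnW (ltn_ord i))).
  rewrite -[RHS]/(map val (filter (preim val (fun m => m < i)) (enum 'I_k))).
  rewrite -filter_map val_enum_ord.
  by rewrite -{2}[nat_of_ord i]add0n filter_iota_ltn // ltnW.
by rewrite /psum /lsum -map_take big_map take_enum big_filter big_enum_cond.
Qed.

Lemma tonn_simplexE (x : 'I_n) (sg : 'S_k) :
  tonn_simplex l x sg = simplex x [seq sg j | j <- enum 'I_k].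
Proof.
apply/setP => a; rewrite inE; apply/existsP/simplexP => -[i hi]; exists i.
- by apply: val_inj => /=; rewrite (eqP hi) sum_perm_prefix.
- by rewrite hi /= sum_perm_prefix.
Qed.

Lemma tonn_faceP A :
  reflect (exists y s, arrangement s /\ A \subset simplex y s) (tonn_face l A).
Proof.
apply: (iffP existsP) => [[x /existsP [sg hA]] | [y [s [hs hA]]]].
  by exists x, [seq sg j | j <- enum 'I_k]; rewrite -tonn_simplexE arrangement_perm.
have [sg defs] := arrangementP hs.
by exists (resn y); apply/existsP; exists sg; rewrite tonn_simplexE -defs simplex_mod.
Qed.

Lemma sub_simplex_rot A y s t : arrangement (s ++ t) ->
  A \subset simplex y (s ++ t) -> A \subset simplex (y + lsum s) (t ++ s).
Proof.
move=> hst hA; have hsz := size_arrangement hst; rewrite size_cat in hsz.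
have hn := lsum_arrangement hst; rewrite lsum_cat in hn.
apply/subsetP => z /(subsetP hA) /simplexP [i ->]; apply/simplexP.
case: (ltnP i (size s)) => hi.
- have hlt : size t + i < k by lia.
  exists (Ordinal hlt); rewrite /= psum_catl ?(ltnW hi) // psum_catr.
  by apply/eqP; rewrite eq_resn addnA -(addnA y) hn -addnA (addnC n) addnA modnDr.
- have hlt : i - size s < k by move: (ltn_ord i); lia.
  exists (Ordinal hlt); rewrite /= -{1}(subnKC hi) psum_catr psum_catl ?addnA //.
  by move: (ltn_ord i); lia.
Qed.

Lemma sub_simplex_window A y s t u v : size t < k ->
    A \subset simplex y (s ++ t ++ u) ->
    (forall j : 'I_k, resn (y + psum (s ++ t ++ u) j) \in A ->
       size s <= j <= size s + size t) ->
  A \subset simplex (y + lsum s) (t ++ v).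
Proof.
move=> ht hA in_window; apply/subsetP => z zA.
have /simplexP [i defz] := subsetP hA _ zA.
have /andP [si it] : size s <= i <= size s + size t by apply: in_window; rewrite -defz.
have hlt : i - size s < k by apply: leq_ltn_trans ht; lia.
apply/simplexP; exists (Ordinal hlt); rewrite defz /=.
by rewrite -{1}(subnKC si) psum_catr !psum_catl ?addnA //; lia.
Qed.

Definition gap_at A (a : 'I_n) d :=
  [/\ 0 < d, resn (a + d) \in A & forall e, 0 < e < d -> resn (a + e) \notin A].

Lemma gap_at_uniq A a d1 d2 : gap_at A a d1 -> gap_at A a d2 -> d1 = d2.
Proof.
case=> d1_gt0 d1A gap1 [d2_gt0 d2A gap2]; case: (ltngtP d1 d2) => // lt_d.
- by move: (gap2 d1); rewrite d1_gt0 lt_d d1A => /(_ isT).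
- by move: (gap1 d2); rewrite d2_gt0 lt_d d2A => /(_ isT).
Qed.

Lemma simplex_index y s c : arrangement s -> c < n ->
  resn (y + c) \in simplex y s -> exists i : 'I_k, c = psum s i.
Proof.
move=> hs hc /simplexP [i /eqP]; rewrite eq_resn eqn_modDl.
have hi : psum s i < n by rewrite -(lsum_arrangement hs) psum_lt_lsum ?size_arrangement.
by rewrite !modn_small // => /eqP ->; exists i.
Qed.

Lemma simplex_gap A y s p : arrangement s -> A \subset simplex y s ->
    resn y \in A -> p < k -> resn (y + psum s p) \in A ->
  exists2 q, p < q <= k & gap_at A (resn (y + psum s p)) (psum s q - psum s p).
Proof.
move=> hs hA yA hp pA.
pose P r := (p < r <= k) && (resn (y + psum s r) \in A).
have exP : exists r, P r by exists k; rewrite /P hp leqnn psum_arrangement // resnDn.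
case: (ex_minnP exP) => q /andP [/andP [pq qk] qA] q_min.
exists q; rewrite ?pq //; split.
- by rewrite subn_gt0 ltn_psum ?size_arrangement.
- by rewrite resn_modl -addnA subnKC // leq_psum // ltnW.
- move=> e /andP [e_gt0 e_lt]; rewrite resn_modl -addnA; apply/negP => eA.
  have hc : psum s p + e < n.
    by rewrite -(lsum_arrangement hs); apply: leq_trans (psum_le_lsum s q); lia.
  have [r er] := simplex_index hs hc (subsetP hA _ eA).
  have pr : p < r by rewrite ltnNge; apply/negP => /(leq_psum s); lia.
  have rq : r < q by rewrite ltnNge; apply/negP => /(leq_psum s); lia.
  by move: (q_min r); rewrite /P pr (ltnW (ltn_ord r)) -er eA leqNgt rq => /(_ isT).
Qed.

Lemma gap_segment A y s a d : arrangement s -> A \subset simplex y s ->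
    resn y \in A -> a \in A -> gap_at A a d ->
  exists j q, [/\ j < q <= k, d = lsum (take (q - j) (drop j s))
                & resn (a + d) = resn (y + psum s q)].
Proof.
move=> hs hA yA aA gap_d; have /simplexP [j defa] := subsetP hA _ aA.
rewrite defa in aA gap_d.
have [q /andP [jq qk] gap_q] := simplex_gap hs hA yA (ltn_ord j) aA.
have jq_le : psum s j <= psum s q by rewrite leq_psum // ltnW.
exists j, q; rewrite (gap_at_uniq gap_d gap_q); split.
- by rewrite jq.
- by rewrite -{1}(subnKC (ltnW jq)) psumD addKn.
- by rewrite defa resn_modl -addnA subnKC.
Qed.

Lemma generic_lsum_eq_mem s t : uniq s -> uniq t -> lsum s = lsum t -> s =i t.
Proof.
move=> s_uniq t_uniq eq_st.
have sum_set u : uniq u -> \sum_(i in [set i in u]) l i = lsum u.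
  by move=> u_uniq; rewrite /lsum big_uniq //; apply: eq_bigl => i; rewrite inE.
have := l_generic (I := [set i in s]) (J := [set i in t]).
rewrite !sum_set // eq_st => /(_ erefl) /setP eq_set i.
by have := eq_set i; rewrite !inE.
Qed.

Definition anchor A (x : 'I_n) :=
  (x \in A) && [exists u : (k.-1).-tuple 'I_k,
                  arrangement (rcons u i0) && (A \subset simplex x (rcons u i0))].

Lemma anchorP A x :
  reflect (x \in A /\ exists u, arrangement (rcons u i0) /\ A \subset simplex x (rcons u i0))
          (anchor A x).
Proof.
apply: (iffP andP) => -[xA hu]; split => //.
  by case/existsP: hu => u /andP []; exists u.
case: hu => u [hs hA]; apply/existsP.
have hsz : size u == k.-1 by rewrite (size_rcons_arrangement hs).
by exists (Tuple hsz); rewrite hs hA.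
Qed.

Lemma anchor_exists_rcons A y u : arrangement (rcons u i0) ->
  A \subset simplex y (rcons u i0) -> A != set0 -> exists x, anchor A x.
Proof.
set s := rcons u i0 => hs hA /set0Pn [a aA].
have u_size := size_rcons_arrangement hs.
pose P r := (r < k) && (resn (y + psum s r) \in A).
have exP : exists r, P r.
  by have /simplexP [i defa] := subsetP hA _ aA; exists i; rewrite /P ltn_ord -defa.
case: (ex_minnP exP) => q /andP [qk qA] q_min.
have q_le : q <= size u by lia.
have split_s : s = take q u ++ drop q u ++ [:: i0] by rewrite catA cat_take_drop cats1.
have hA' : A \subset simplex (y + lsum (take q u)) (drop q u ++ take q u ++ [:: i0]).
  apply: (sub_simplex_window (u := [:: i0])); rewrite -?split_s //.
    by rewrite size_drop; lia.
  move=> j jA; rewrite size_takel // size_drop; apply/andP; split.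
    by apply: q_min; rewrite /P ltn_ord jA.
  by move: (ltn_ord j); lia.
exists (resn (y + lsum (take q u))); apply/anchorP; split.
  by move: qA; rewrite /s -cats1 psum_catl.
exists (drop q u ++ take q u); split; last by rewrite -cats1 -catA /= simplex_mod.
rewrite /arrangement -cats1; apply: perm_trans hs.
by rewrite split_s catA perm_cat2r perm_catC.
Qed.

Lemma anchor_exists A : A != set0 -> tonn_face l A -> exists x, anchor A x.
Proof.
move=> A_ne /tonn_faceP [y [s [hs hA]]].
have i0s : i0 \in s by rewrite (perm_mem hs) mem_enum.
move: hs hA; case/splitPr: i0s => s1 s2; rewrite -cat_rcons => hs hA.
apply: (@anchor_exists_rcons _ (y + lsum (rcons s1 i0)) (s2 ++ s1)) A_ne.
  by rewrite /arrangement rcons_cat perm_catC.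
by rewrite rcons_cat; apply: sub_simplex_rot.
Qed.

Lemma anchor_last_gap A (x : 'I_n) u : arrangement (rcons u i0) ->
    A \subset simplex x (rcons u i0) -> x \in A ->
  exists m, [/\ m < k, resn (x + psum (rcons u i0) m) \in A,
     gap_at A (resn (x + psum (rcons u i0) m)) (lsum (drop m (rcons u i0)))
   & i0 \in drop m (rcons u i0)].
Proof.
set s := rcons u i0 => hs hA xA; have xA' : resn x \in A by rewrite resn_ord.
pose P r := (r < k) && (resn (x + psum s r) \in A).
have exP : exists r, P r.
  by exists 0; rewrite /P (leq_ltn_trans _ (ltn_ord i0)) // psum0 addn0.
have ubP r : P r -> r <= k by case/andP => /ltnW.
case: (ex_maxnP exP ubP) => m /andP [mk mA] m_max.
have [q /andP [mq qk] gap_q] := simplex_gap hs hA xA' mk mA.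
have q_eq_k : q = k.
  apply/eqP; rewrite eqn_leq qk leqNgt; apply/negP => q_lt_k.
  have [_ qA _] := gap_q; move: qA; rewrite resn_modl -addnA subnKC; last exact/leq_psum/ltnW.
  by move=> /(conj q_lt_k) /andP /m_max; rewrite leqNgt mq.
have gap_eq : psum s q - psum s m = lsum (drop m s).
  by rewrite q_eq_k psum_oversize ?size_arrangement // -(psum_add_lsum_drop s m) addKn.
exists m; split; rewrite -?gap_eq //.
have m_le : m <= size u by move: (size_rcons_arrangement hs); lia.
by rewrite /s drop_rcons // mem_rcons mem_head.
Qed.

Lemma anchor_uniq A x1 x2 : anchor A x1 -> anchor A x2 -> x1 = x2.
Proof.
move=> /anchorP [x1A [u1 [hs1 hA1]]] /anchorP [x2A [u2 [hs2 hA2]]].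
set s1 := rcons u1 i0 in hs1 hA1; set s2 := rcons u2 i0 in hs2 hA2.
have uniq_arr t : arrangement t -> uniq t by move=> ht; rewrite (perm_uniq ht) enum_uniq.
have [m [mk aA gap_a i0_last]] := anchor_last_gap hs1 hA1 x1A.
set a := resn (x1 + psum s1 m) in aA gap_a.
have x2A' : resn x2 \in A by rewrite resn_ord.
have [j [q [/andP [jq qk] d_eq ad_eq]]] := gap_segment hs2 hA2 x2A' aA gap_a.
(* Genericity identifies the two readings of the gap ending at x1. *)
have i0_seg : i0 \in take (q - j) (drop j s2).
  have s1_drop := drop_uniq m (uniq_arr _ hs1).
  have s2_seg := take_uniq (q - j) (drop_uniq j (uniq_arr _ hs2)).
  by rewrite -(generic_lsum_eq_mem s1_drop s2_seg d_eq).
have q_eq_k : q = k.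
  apply/eqP; rewrite eqn_leq qk leqNgt; apply/negP => q_lt_k.
  have : i0 \in take q s2 by rewrite -(subnKC (ltnW jq)) takeD mem_cat i0_seg orbT.
  have q_le : q <= size u2 by rewrite (size_rcons_arrangement hs2) -ltnS (ltn_predK q_lt_k).
  rewrite /s2 -cats1 takel_cat // => /mem_take.
  by apply/negP; move: (uniq_arr _ hs2); rewrite rcons_uniq => /andP [].
have a_gap : resn (a + lsum (drop m s1)) = x1.
  by rewrite resn_modl -addnA psum_add_lsum_drop lsum_arrangement // resnDn resn_ord.
by rewrite -a_gap ad_eq q_eq_k psum_arrangement // resnDn resn_ord.
Qed.

(* x - l_i0 in Z_n: the last vertex of every simplex anchored at x. *)
Definition closing_vertex (x : 'I_n) : 'I_n := resn (x + (n - l i0)).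

Lemma lsum_rcons_arrangement u : arrangement (rcons u i0) -> lsum u = n - l i0.
Proof.
by move=> hs; rewrite -(lsum_arrangement hs) -cats1 lsum_cat /lsum big_seq1 addnK.
Qed.

Lemma closing_vertex_in x u : arrangement (rcons u i0) ->
  closing_vertex x \in simplex x (rcons u i0).
Proof.
move=> hs; have u_size : size u < k by rewrite (size_rcons_arrangement hs); lia.
apply/simplexP; exists (Ordinal u_size).
by rewrite /= -cats1 psum_catl // psum_oversize // lsum_rcons_arrangement.
Qed.

Lemma closing_vertex_neq x u : arrangement (rcons u i0) -> closing_vertex x != x.
Proof.
move=> hs; rewrite -{2}(resn_ord x) eq_resn -{2}(addn0 x) eqn_modDl mod0n.
have /andP [gt0 ltn] : 0 < n - l i0 < n.
  have := size_le_lsum u; rewrite (lsum_rcons_arrangement hs) (size_rcons_arrangement hs).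
  by have := l_gt0 i0; lia.
by rewrite modn_small // -lt0n.
Qed.

Lemma anchor_toggle A x : anchor A x -> anchor (toggle (closing_vertex x) A) x.
Proof.
move=> /anchorP [xA [u [hs hA]]]; apply/anchorP; split.
  by rewrite in_toggle // eq_sym (closing_vertex_neq _ hs).
by exists u; rewrite toggle_subset ?closing_vertex_in.
Qed.

Lemma anchor_face A x : anchor A x -> (A != set0) && tonn_face l A.
Proof.
case/anchorP=> xA [u [hs hA]]; apply/andP; split; first by apply/set0Pn; exists x.
by apply/tonn_faceP; exists x, (rcons u i0).
Qed.

Lemma face_anchorE A : (A != set0) && tonn_face l A = [exists x, anchor A x].
Proof.
by apply/idP/existsP => [/andP [A_ne /(anchor_exists A_ne)] | [x /anchor_face]].
Qed.

Definition flip A : {set 'I_n} :=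
  if [pick x | anchor A x] is Some x then toggle (closing_vertex x) A else A.

Lemma flip_anchor A x : anchor A x -> flip A = toggle (closing_vertex x) A.
Proof.
rewrite /flip => ax; case: pickP => [y /anchor_uniq/(_ ax) -> // | /(_ x)].
by rewrite ax.
Qed.

Lemma flip_id A : ~~ [exists x, anchor A x] -> flip A = A.
Proof.
by rewrite /flip; case: pickP => // x ax /negP []; apply/existsP; exists x.
Qed.

Lemma flipK : involutive flip.
Proof.
move=> A; case: (boolP [exists x, anchor A x]) => [/existsP [x ax] | no_anchor].
  by rewrite (flip_anchor ax) (flip_anchor (anchor_toggle ax)) toggleK.
by rewrite (flip_id no_anchor) (flip_id no_anchor).
Qed.

Lemma face_flip A :
  (flip A != set0) && tonn_face l (flip A) = (A != set0) && tonn_face l A.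
Proof.
rewrite !face_anchorE.
case: (boolP [exists x, anchor A x]) => [/existsP [x ax] | no_anchor].
  by rewrite (flip_anchor ax); apply/existsP; exists x; apply: anchor_toggle.
by rewrite (flip_id no_anchor) (negbTE no_anchor).
Qed.

Lemma sign_flip A : (A != set0) && tonn_face l A ->
  ((-1) ^+ #|flip A|.-1 = - (-1) ^+ #|A|.-1 :> int)%R.
Proof.
rewrite face_anchorE => /existsP [x ax]; rewrite (flip_anchor ax).
have /andP [xA _] := ax; have /andP [x_toggle _] := anchor_toggle ax.
by apply: sign_toggle; apply/card_gt0P; exists x.
Qed.

Lemma tonn_euler_char_eq0 : tonn_euler_char n l = 0%R.
Proof. exact: sum_sign_reversing_involution flipK face_flip sign_flip. Qed.

End Tonnetz.

Theorem proposition2p6 (k : nat) (l : 'I_k -> nat)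
  (hk : 2 <= k) (hpos : forall i, 0 < l i)
  (hgen : generic l) (hred : reduced l) :
  tonn_euler_char (\sum_(i < k) l i) l = 0%R.
Proof. exact: (tonn_euler_char_eq0 (Ordinal (ltnW hk)) hpos hk hgen). Qed.
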